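(* For every constant specification $\mathsf{CS}$ for $\mathsf{LPC}^+$ there exist formulas $\phi,\psi,\chi$ such that $\models_{\mathsf{LPC}^+_{\mathsf{CS}}}\phi\equiv\psi$ but $\not\models_{\mathsf{LPC}^+_{\mathsf{CS}}}(\phi>\chi)\equiv(\psi>\chi)$. (Indeed one may take $\phi=p$, $\psi=p\wedge p$, $\chi=q$ for distinct atoms $p,q$.)
   Context: Language: countable sets $\mathsf{Const}$, $\mathsf{Var}$, $\mathsf{Prop}$; terms $t ::= c \mid x \mid t\cdot t \mid t+t \mid\ !t$; formulas $\phi ::= p \mid \neg\phi \mid \phi\wedge\phi \mid \phi\supset\phi \mid \phi>\phi \mid t{:}\phi$; $\mathsf{Tm},\mathsf{Fm}$ the sets of terms and formulas; $\phi\equiv\psi:=(\phi\supset\psi)\wedge(\psi\supset\phi)$. A constant specification $\mathsf{CS}$ is a set of formulas $c{:}\phi$ with $c\in\mathsf{Const}$ and $\phi$ an instance of the axiom schemes (A1) classical tautologies, (A2) $(\phi>(\psi\supset\chi))\supset((\phi>\psi)\supset(\phi>\chi))$, (A3) $\phi>\phi$, (A4) $(\phi>\psi)\supset(\phi\supset\psi)$, (A5) $(s{:}(\phi>\psi)\wedge t{:}\phi) > (s\cdot t){:}\psi$, (A6) $s{:}\phi > (s+t){:}\phi$, (A7) $t{:}\phi>(s+t){:}\phi$, (A8) $t{:}\phi>\phi$, (A9) $t{:}\phi > (!t){:}t{:}\phi$. A relational model is $\mathcal M=(W,W_N,R_{Fm},R_{Tm},V)$: $W$ a nonempty set, $W_N\subseteq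 W$ nonempty (normal states); $R_{Fm}$ assigns to each $\phi\in\mathsf{Fm}$ a relation $R_\phi\subseteq W_N\times W_N$; $R_{Tm}$ assigns to each $t\in\mathsf{Tm}$ a relation $R_t\subseteq W\times W$; $V$ assigns to each normal state $w$ a set $V(w)\subseteq\mathsf{Prop}$ and to each $w\in W\setminus W_N$ a set $V(w)\subseteq\mathsf{Fm}$. $R_\phi(w)$, $R_t(w)$ denote the sets of successors. Truth: at $w\in W\setminus W_N$, $\mathcal M,w\models\phi$ iff $\phi\in V(w)$; at $w\in W_N$: $p$ iff $p\in V(w)$; $\neg,\wedge,\supset$ classically; $\phi>\psi$ iff $R_\phi(w)\subseteq[\psi]$; $t{:}\phi$ iff $R_t(w)\subseteq[\phi]$, where $[\phi]=\{w\in W:\mathcal M,w\models\phi\}$. $\mathcal M$ is an $\mathsf{LPC}^+_{\mathsf{CS}}$-model if for all $w\in W_N$: (1) $R_\phi(w)\subseteq[\phi]$ for all $\phi$; (2) if $w\in[\phi]$ then $w\in R_\phi(w)$; (3) $R_c(w)\subseteq[\phi]$ for each $c{:}\phi\in\mathsf{CS}$; (4) $R_{s+t}(w)\subseteq R_s(w)\cap R_t(w)$; (5) for all $v\in R_{s\cdot t}(w)$ and all $\phi,\psi$: if $w\in[s{:}(\phi>\psi)\wedge t{:}\phi]$ then $v\in[\psi]$; (6) $wR_tw$ for all $t$; (7) for all $t$ and $v,u\in W$, if $wR_{!t}v$ and $vR_tu$ then $wR_tu$. $\models_{\mathsf{LPC}^+_{\mathsf{CS}}}\phi$ means $\phi$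 is true at every normal state of every $\mathsf{LPC}^+_{\mathsf{CS}}$-model. *)

(* Language of LPC^+: Const, Var, Prop are taken to be nat (countable sets). *)

Inductive Tm : Type :=
| TConst : nat -> Tm
| TVar   : nat -> Tm
| TApp   : Tm -> Tm -> Tm
| TSum   : Tm -> Tm -> Tm
| TBang  : Tm -> Tm.

Inductive Fm : Type :=
| FAtom : nat -> Fm
| FNeg  : Fm -> Fm
| FAnd  : Fm -> Fm -> Fm
| FImp  : Fm -> Fm -> Fm
| FCond : Fm -> Fm -> Fm       (* phi > psi *)
| FJust : Tm -> Fm -> Fm.

Definition FEquiv (phi psi : Fm) : Fm := FAnd (FImp phi psi) (FImp psi phi).

(* (A1) instances of classical tautologies: formulas true under every Boolean
   valuation that treats atoms, conditionals and justification formulas as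
   propositional letters. *)
Fixpoint beval (v : Fm -> bool) (phi : Fm) : bool :=
  match phi with
  | FAtom _ => v phi
  | FNeg a => negb (beval v a)
  | FAnd a b => andb (beval v a) (beval v b)
  | FImp a b => orb (negb (beval v a)) (beval v b)
  | FCond _ _ => v phi
  | FJust _ _ => v phi
  end.

Definition tautology_instance (phi : Fm) : Prop := forall v, beval v phi = true.

Definition axiom_instance (phi : Fm) : Prop :=
  tautology_instance phi
  \/ (exists a b c, phi = FImp (FCond a (FImp b c)) (FImp (FCond a b) (FCond a c)))
  \/ (exists a, phi = FCond a a)
  \/ (exists a b, phi = FImp (FCond a b) (FImp a b))
  \/ (exists s t a b, phi = FCond (FAnd (FJust s (FCond a b)) (FJust t a))
                                  (FJust (TApp s t) b))
  \/ (exists s t a, phi = FCond (FJust s a) (FJust (TSum s t) a))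
  \/ (exists s t a, phi = FCond (FJust t a) (FJust (TSum s t) a))
  \/ (exists t a, phi = FCond (FJust t a) a)
  \/ (exists t a, phi = FCond (FJust t a) (FJust (TBang t) (FJust t a))).

Definition is_CS (CS : Fm -> Prop) : Prop :=
  forall chi, CS chi -> exists c phi, chi = FJust (TConst c) phi /\ axiom_instance phi.

(* Relational models. V is split into VN (valuation of atoms at normal states)
   and VA (sets of formulas at non-normal states). *)
Record model : Type := Model {
  W  : Type;
  WN : W -> Prop;
  RF : Fm -> W -> W -> Prop;
  RT : Tm -> W -> W -> Prop;
  VN : W -> nat -> Prop;
  VA : W -> Fm -> Prop
}.

Fixpoint sat (M : model) (w : W M) (phi : Fm) {struct phi} : Prop :=
  (WN M w ->
     match phi with
     | FAtom p => VN M w p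
     | FNeg a => ~ sat M w a
     | FAnd a b => sat M w a /\ sat M w b
     | FImp a b => sat M w a -> sat M w b
     | FCond a b => forall v, RF M a w v -> sat M v b
     | FJust t a => forall v, RT M t w v -> sat M v a
     end)
  /\ (~ WN M w -> VA M w phi).

Definition is_LPC_model (CS : Fm -> Prop) (M : model) : Prop :=
  (exists w, WN M w)
  /\ (forall phi w v, RF M phi w v -> WN M w /\ WN M v)
  /\ forall w, WN M w ->
     (forall phi v, RF M phi w v -> sat M v phi)
     /\ (forall phi, sat M w phi -> RF M phi w w)                                   (* 2 *)
     /\ (forall c phi v, CS (FJust (TConst c) phi) -> RT M (TConst c) w v -> sat M v phi)
     /\ (forall s t v, RT M (TSum s t) w v -> RT M s w v /\ RT M t w v)
     /\ (forall s t v phi psi, RT M (TApp s t) w v ->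
           sat M w (FAnd (FJust s (FCond phi psi)) (FJust t phi)) -> sat M v psi)
     /\ (forall t, RT M t w w)
     /\ (forall t v u, RT M (TBang t) w v -> RT M t v u -> RT M t w u).

Definition valid (CS : Fm -> Prop) (phi : Fm) : Prop :=
  forall M, is_LPC_model CS M -> forall w, WN M w -> sat M w phi.

(* Condition (2) forces w into R_phi(w) only when w satisfies phi, and the
   family R_Fm is indexed by syntax, so nothing links R_p to R_(p /\ p) even
   though p and p /\ p are equivalent.  In a two-state model where the
   justification relations are the identity, give p /\ p an extra successor
   at which q fails.  Every axiom instance is then true everywhere, so the
   model is an LPC^+_CS-model for every constant specification CS. *)

From Stdlib Require Import Bool Setoid.

Lemma sat_normal (M : model) (w : W M) (phi : Fm) : WN M w ->
  sat M w phi <->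
  match phi with
  | FAtom p => VN M w p
  | FNeg a => ~ sat M w a
  | FAnd a b => sat M w a /\ sat M w b
  | FImp a b => sat M w a -> sat M w b
  | FCond a b => forall v, RF M a w v -> sat M v b
  | FJust t a => forall v, RT M t w v -> sat M v a
  end.
Proof.
  intros Hw; destruct phi; simpl; split;
    solve [intros [H _]; exact (H Hw) | intros H; split; [intros _; exact H | contradiction]].
Qed.

Lemma valid_equiv_and_self (CS : Fm -> Prop) (phi : Fm) :
  valid CS (FEquiv phi (FAnd phi phi)).
Proof.
  intros M _ w Hw.
  apply (sat_normal M w (FAnd _ _) Hw); split;
    apply (sat_normal M w (FImp _ _) Hw); rewrite (sat_normal M w (FAnd phi phi) Hw).
  - intros H; split; exact H.
  - intros [H _]; exact H.
Qed.

Definition p_and_p : Fm := FAnd (FAtom 0) (FAtom 0).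

Definition is_p_and_p (phi : Fm) : bool :=
  match phi with
  | FAnd (FAtom 0) (FAtom 0) => true
  | _ => false
  end.

(* Truth in the two-state model below, defined first because condition (2)
   makes its conditional relations depend on truth.  The atom q := 1 fails
   exactly at [false], every other atom (in particular p := 0) holds
   everywhere, and p /\ p has the extra conditional successor [false] from
   [true]. *)
Fixpoint holds (phi : Fm) (w : bool) : bool :=
  match phi with
  | FAtom n => negb (Nat.eqb n 1) || w
  | FNeg a => negb (holds a w)
  | FAnd a b => holds a w && holds b w
  | FImp a b => negb (holds a w) || holds b w
  | FCond a b => implb (holds a w) (holds b w)
                 && implb (is_p_and_p a && w) (holds b false)
  | FJust _ a => holds a w
  end.

Lemma beval_holds (w : bool) (phi : Fm) :
  beval (fun x => holds x w) phi = holds phi w.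
Proof.
  induction phi; simpl; congruence.
Qed.

Lemma holds_p_and_p (phi : Fm) (w : bool) : is_p_and_p phi = true -> holds phi w = true.
Proof.
  destruct phi as [| |[[|[|]]| | | | |] [[|[|]]| | | | |]| | |]; simpl;
    congruence || reflexivity.
Qed.

Lemma holds_axiom_instance (phi : Fm) (w : bool) : axiom_instance phi -> holds phi w = true.
Proof.
  intros [H|[H|[H|[H|[H|[H|[H|[H|H]]]]]]]].
  - rewrite <- beval_holds; apply H.
  - destruct H as (a & b & c & ->); simpl.
    destruct (holds a w), (holds b w), (holds c w), (is_p_and_p a && w),
      (holds b false), (holds c false); reflexivity.
  - destruct H as (a & ->); simpl.
    destruct (is_p_and_p a) eqn:Ha.
    + rewrite !holds_p_and_p by exact Ha; destruct w; reflexivity.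
    + destruct (holds a w); reflexivity.
  - destruct H as (a & b & ->); simpl.
    destruct (holds a w), (holds b w), (is_p_and_p a && w), (holds b false);
      reflexivity.
  - destruct H as (s & t & a & b & ->); simpl.
    destruct (holds a w), (holds b w), (is_p_and_p a && w), (holds b false);
      reflexivity.
  - destruct H as (s & t & a & ->); simpl; destruct (holds a w); reflexivity.
  - destruct H as (s & t & a & ->); simpl; destruct (holds a w); reflexivity.
  - destruct H as (t & a & ->); simpl; destruct (holds a w); reflexivity.
  - destruct H as (t & a & ->); simpl; destruct (holds a w); reflexivity.
Qed.

Definition two_state_model : model :=
  {| W := bool;
     WN := fun _ => True;
     RF := fun a w v => (v = w /\ holds a w = true)
                        \/ (is_p_and_p a && w = true /\ v = false);
     RT := fun _ w v => v = w;
     VN := fun w n => holds (FAtom n) w = true;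
     VA := fun _ _ => False |}.

Lemma sat_two_state_model (phi : Fm) (w : bool) :
  sat two_state_model w phi <-> holds phi w = true.
Proof.
  revert w; induction phi as [n|a IHa|a IHa b IHb|a IHa b IHb|a IHa b IHb|t a IHa];
    intros w; rewrite (sat_normal two_state_model w _ I); simpl.
  - reflexivity.
  - rewrite IHa, negb_true_iff, not_true_iff_false; reflexivity.
  - rewrite IHa, IHb, andb_true_iff; reflexivity.
  - rewrite IHa, IHb, orb_true_iff, negb_true_iff.
    destruct (holds a w); intuition congruence.
  - rewrite (andb_true_iff (implb _ _)), !implb_true_iff; split.
    + intros H; split.
      * intros Ha; apply IHb, H; left; auto.
      * intros Hpp; apply IHb, H; right; auto.
    + intros [H1 H2] v [[-> Ha] | [Hpp ->]]; apply IHb; auto.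
  - split.
    + intros H; apply IHa, H; reflexivity.
    + intros H v ->; apply IHa, H.
Qed.

Lemma two_state_model_is_LPC_model (CS : Fm -> Prop) :
  is_CS CS -> is_LPC_model CS two_state_model.
Proof.
  intros HCS; split; [exists true; exact I | split; [split; exact I |]].
  intros w _; split; [| split; [| split; [| split; [| split; [| split]]]]].
  - intros phi v [[-> H] | [Hpp ->]]; apply sat_two_state_model; [exact H |].
    apply andb_true_iff in Hpp as [Hpp _]; apply holds_p_and_p, Hpp.
  - intros phi H; left; split; [reflexivity | apply sat_two_state_model, H].
  - intros c phi v Hc ->; apply sat_two_state_model.
    destruct (HCS _ Hc) as (c' & phi' & E & Hax); injection E as _ ->.
    apply holds_axiom_instance, Hax.
  - intros s t v ->; split; reflexivity.
  - intros s t v phi psi -> H.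
    apply sat_two_state_model in H; apply sat_two_state_model; simpl in H.
    apply andb_true_iff in H as [[Himp _]%andb_true_iff Hphi].
    rewrite Hphi in Himp; exact Himp.
  - reflexivity.
  - intros t v u -> ->; reflexivity.
Qed.

Theorem mainTheorem6 : forall CS : Fm -> Prop, is_CS CS ->
  exists phi psi chi : Fm,
    valid CS (FEquiv phi psi) /\ ~ valid CS (FEquiv (FCond phi chi) (FCond psi chi)).
Proof.
  intros CS HCS; exists (FAtom 0), p_and_p, (FAtom 1); split.
  - apply valid_equiv_and_self.
  - intros Hvalid.
    pose proof (Hvalid _ (two_state_model_is_LPC_model CS HCS) true I) as H.
    apply sat_two_state_model in H; discriminate H.
Qed.
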